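(* Let $\mathbb{F}$ be an algebraically closed field of characteristic zero. For any $f\in S_{3,3}$, the set $P_{3,3}\setminus\{f\}$ is not a separating set for $\mathcal{O}(\mathcal{N}_3^3)^{GL_3}$. In particular, no proper subset of $S_{3,3}$ is a separating set for $\mathcal{O}(\mathcal{N}_3^3)^{GL_3}$.
   Context: $\mathcal{N}_3^3$ is the set of triples $\underline{A}=(A_1,A_2,A_3)$ of nilpotent $3\times3$ matrices over $\mathbb{F}$, with $GL_3$ acting by simultaneous conjugation; $\mathcal{O}(\mathcal{N}_3^3)^{GL_3}$ is the algebra of $GL_3$-invariant polynomial functions on $\mathcal{N}_3^3$. $\mathrm{tr}(Y_{i_1}\cdots Y_{i_r})$ denotes the invariant $\underline{A}\mapsto\mathrm{tr}(A_{i_1}\cdots A_{i_r})$. $S_{3,3}$ is the set consisting of: $\mathrm{tr}(Y_iY_j),\ \mathrm{tr}(Y_i^2Y_j),\ \mathrm{tr}(Y_iY_j^2),\ \mathrm{tr}(Y_i^2Y_j^2),\ \mathrm{tr}(Y_i^2Y_j^2Y_iY_j)$ for $1\le i<j\le3$; $\mathrm{tr}(Y_1Y_2Y_3)$, $\mathrm{tr}(Y_1Y_3Y_2)$; $\mathrm{tr}(Y_i^2Y_jY_k)$ for $\{i,j,k\}=\{1,2,3\}$; $\mathrm{tr}(Y_1^2Y_2Y_1Y_3)$, $\mathrm{tr}(Y_2^2Y_1Y_2Y_3)$, $\mathrm{tr}(Y_3^2Y_1Y_3Y_2)$. $P_{3,3}=S_{3,3}\sqcup P'_{3,3}$, where $P'_{3,3}$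 consists of $\mathrm{tr}(Y_i^2Y_j^2Y_k)$ and $\mathrm{tr}(Y_i^2Y_j^2Y_iY_k)$ for $\{i,j,k\}=\{1,2,3\}$, and $\mathrm{tr}(Y_1^2Y_2^2Y_3^2)$. Two points $u,v$ are separated by a subset $S$ if some $f\in S$ has $f(u)\ne f(v)$, and separated if separated by the whole invariant algebra; $S$ is separating if all separated pairs are separated by $S$. *)

From HB Require Import structures.
From mathcomp Require Import all_boot all_order all_algebra.
From mathcomp Require Import mpoly.
Set Implicit Arguments. Unset Strict Implicit. Unset Printing Implicit Defensive.
Import Order.TTheory GRing.Theory Num.Theory.
Local Open Scope ring_scope.

(* A triple (A_1, A_2, A_3) of 3x3 matrices; component i+1 is X i. *)
Definition triple (F : fieldType) := 'I_3 -> 'M[F]_3.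

Definition nilpotent_mx (F : fieldType) (A : 'M[F]_3) : Prop :=
  exists n : nat, A ^+ n = 0.

Definition in_N (F : fieldType) (X : triple F) : Prop :=
  forall i, nilpotent_mx (X i).

Definition coords (F : fieldType) (X : triple F) : 'I_27 -> F :=
  fun k => X (inord (k %/ 9)) (inord ((k %% 9) %/ 3)) (inord (k %% 3)).

Definition polyfun_on_N (F : fieldType) (g : triple F -> F) : Prop :=
  exists p : {mpoly F[27]}, forall X, in_N X -> g X = p.@[coords X].

Definition conj_act (F : fieldType) (G : 'M[F]_3) (X : triple F) : triple F :=
  fun i => G *m X i *m invmx G.

(* elements of O(N_3^3)^{GL_3} (represented by functions, equality on N) *)
Definition invariant (F : fieldType) (g : triple F -> F) : Prop :=
  polyfun_on_N g /\
  forall G X, G \in unitmx -> in_N X -> g (conj_act G X) = g X.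

Definition separated_by (F : fieldType) (S : (triple F -> F) -> Prop)
  (u v : triple F) : Prop :=
  exists f, S f /\ f u <> f v.

Definition separated (F : fieldType) (u v : triple F) : Prop :=
  separated_by (@invariant F) u v.

Definition separating (F : fieldType) (S : (triple F -> F) -> Prop) : Prop :=
  forall u v, in_N u -> in_N v -> separated u v -> separated_by S u v.

(* tr(Y_{i_1} ... Y_{i_r}); indices in words are 1, 2, 3 as in the paper *)
Definition trw (F : fieldType) (w : seq nat) (X : triple F) : F :=
  \tr (\prod_(i <- w) X (inord i.-1)).

Definition pairs_lt : seq (nat * nat) := [:: (1, 2); (1, 3); (2, 3)]%N.
Definition perms3 : seq (nat * nat * nat) :=
  [:: (1, 2, 3); (1, 3, 2); (2, 1, 3); (2, 3, 1); (3, 1, 2); (3, 2, 1)]%N.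

Definition S33 : seq (seq nat) :=
  flatten [seq [:: [:: p.1; p.2]; [:: p.1; p.1; p.2]; [:: p.1; p.2; p.2];
                   [:: p.1; p.1; p.2; p.2]; [:: p.1; p.1; p.2; p.2; p.1; p.2]]
          | p <- pairs_lt]
  ++ [:: [:: 1; 2; 3]; [:: 1; 3; 2]]%N
  ++ [seq [:: t.1.1; t.1.1; t.1.2; t.2] | t <- perms3]
  ++ [:: [:: 1; 1; 2; 1; 3]; [:: 2; 2; 1; 2; 3]; [:: 3; 3; 1; 3; 2]]%N.

Definition P'33 : seq (seq nat) :=
  [seq [:: t.1.1; t.1.1; t.1.2; t.1.2; t.2] | t <- perms3]
  ++ [seq [:: t.1.1; t.1.1; t.1.2; t.1.2; t.1.1; t.2] | t <- perms3]
  ++ [:: [:: 1; 1; 2; 2; 3; 3]]%N.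

Definition P33 : seq (seq nat) := S33 ++ P'33.

Definition trset (F : fieldType) (L : seq (seq nat)) : (triple F -> F) -> Prop :=
  fun g => exists2 w, w \in L & g = trw w.

Definition eq_on_N (F : fieldType) (f g : triple F -> F) : Prop :=
  forall X, in_N X -> f X = g X.

Definition P33_minus (F : fieldType) (f : triple F -> F) : (triple F -> F) -> Prop :=
  fun g => @trset F P33 g /\ ~ eq_on_N g f.

From Pilot Require Import Defs.
From HB Require Import structures.
From mathcomp Require Import all_boot all_order all_algebra.
From mathcomp Require Import mpoly.
From mathcomp Require Import zify.
Set Implicit Arguments. Unset Strict Implicit. Unset Printing Implicit Defensive.
Import Order.TTheory GRing.Theory Num.Theory.
Local Open Scope ring_scope.

(* Every tr(w) with w in S_{3,3} is an invariant, so it is enough to exhibit,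
   for each such w, two points of N_3^3 on which tr(w) differs while every
   other element of P_{3,3} agrees: then tr(w) separates them and
   P_{3,3} \ {tr(w)} does not.  The witnesses are triples of integer
   matrices, so all the traces involved are integers that are computed once
   and for all; in characteristic zero distinct integers remain distinct in F.
   A subset of S_{3,3} missing tr(w) lies in P_{3,3} \ {tr(w)}, so it is not
   separating either. *)

Section TraceWords.
Variable F : fieldType.

Lemma prod_conj_act (G : 'M[F]_3) (X : triple F) (w : seq nat) :
  G \in unitmx ->
  \prod_(i <- w) conj_act G X (inord i.-1) =
  G *m \prod_(i <- w) X (inord i.-1) *m invmx G.
Proof.
move=> uG; elim: w => [|a w IH]; first by rewrite !big_nil mulmx1 mulmxV.
rewrite !big_cons IH /conj_act -!mulmxE !mulmxA.
by rewrite -(mulmxA _ (invmx G) G) mulVmx // mulmx1.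
Qed.

Lemma trw_conj_act (G : 'M[F]_3) (X : triple F) w :
  G \in unitmx -> trw w (conj_act G X) = trw w X.
Proof.
by move=> uG; rewrite /trw prod_conj_act // mxtrace_mulC mulmxA mulVmx ?mul1mx.
Qed.

Definition generic_mx (i : 'I_3) : 'M[{mpoly F[27]}]_3 :=
  \matrix_(r, c) 'X_(inord (9 * i + 3 * r + c)).

Lemma meval_generic_mx (X : triple F) (i : 'I_3) :
  map_mx (meval (coords X)) (generic_mx i) = X i.
Proof.
apply/matrixP => r c; rewrite !mxE mevalXU /coords.
have := ltn_ord i; have := ltn_ord r; have := ltn_ord c => ltc ltr lti.
have lt27 : (9 * i + 3 * r + c < 27)%N by lia.
have div9 : ((9 * i + 3 * r + c) %/ 9 = i)%N by lia.
have div3 : (((9 * i + 3 * r + c) %% 9) %/ 3 = r)%N by lia.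
have mod3 : ((9 * i + 3 * r + c) %% 3 = c)%N by lia.
by rewrite inordK // div9 div3 mod3 !inord_val.
Qed.

Lemma trw_polyfun w : polyfun_on_N (trw (F := F) w).
Proof.
exists (\tr (\prod_(i <- w) generic_mx (inord i.-1))) => X _.
have meval_prod : map_mx (meval (coords X)) (\prod_(i <- w) generic_mx (inord i.-1))
                  = \prod_(i <- w) X (inord i.-1).
  rewrite (big_morph _ (fun A B => map_mxM _ A B) (map_mx1 _ 3)).
  by apply: eq_bigr => i _; rewrite meval_generic_mx.
rewrite /trw -meval_prod /mxtrace rmorph_sum.
by apply: eq_bigr => k _; rewrite mxE.
Qed.

Lemma trw_invariant w : Defs.invariant (trw (F := F) w).
Proof. by split; [exact: trw_polyfun | move=> G X uG _; exact: trw_conj_act]. Qed.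

Lemma separating_sub (S S' : (triple F -> F) -> Prop) :
  (forall g, S' g -> S g) -> separating S' -> separating S.
Proof.
move=> sub_S'S sepS' u v Nu Nv uv; have [g [S'g neq]] := sepS' u v Nu Nv uv.
by exists g; split; first exact: sub_S'S.
Qed.

Lemma trset_minus_not_separating (L : seq (seq nat)) w (u v : triple F) :
  in_N u -> in_N v -> trw w u <> trw w v ->
  (forall w', w' \in L -> w' != w -> trw w' u = trw w' v) ->
  ~ separating (fun g : triple F -> F => trset L g /\ ~ eq_on_N g (trw w)).
Proof.
move=> Nu Nv neq agree sep.
have [_ [[[w' Lw' ->] not_w] neq']] :=
  sep u v Nu Nv (ex_intro _ (trw w) (conj (trw_invariant w) neq)).
have [eq_w'w | ne_w'w] := eqVneq w' w; first by apply: not_w; rewrite eq_w'w.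
exact/neq'/agree.
Qed.

End TraceWords.

Lemma intr_inj_pchar0 (F : idomainType) : [pchar F] =i pred0 ->
  injective (fun n : int => n%:~R : F).
Proof.
move=> /pcharf0P natf_eq0 a b eq_ab; apply/eqP; rewrite -subr_eq0.
have : (a - b)%:~R == 0 :> F by rewrite rmorphB /= eq_ab subrr.
case: (a - b) => n; rewrite ?NegzE ?mulrNz ?oppr_eq0.
- by rewrite -[n%:~R]/(n%:R) natf_eq0.
- by rewrite -[n.+1%:~R]/(n.+1%:R) natf_eq0.
Qed.

Definition zmx := seq (seq int).

Definition zent (a : zmx) (i j : nat) : int := nth 0 (nth [::] a i) j.

Definition zmx_of (f : nat -> nat -> int) : zmx := mkseq (fun i => mkseq (f i) 3) 3.

Definition zmul (a b : zmx) : zmx :=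
  zmx_of (fun i j => zent a i 0 * zent b 0 j + zent a i 1 * zent b 1 j
                     + zent a i 2 * zent b 2 j).

Definition znilpotent (a : zmx) : bool := zmul a (zmul a a) == zmx_of (fun _ _ => 0).

Definition zid : zmx := zmx_of (fun i j => (i == j)%:Z).

Definition ztrace (a : zmx) : int := zent a 0 0 + zent a 1 1 + zent a 2 2.

(* Letter i selects the same matrix as [inord i.-1] does in [trw]. *)
Definition zletter (X : seq zmx) (i : nat) : zmx :=
  nth [::] X (if (i.-1 < 3)%N then i.-1 else 0).

Definition zprod (X : seq zmx) (w : seq nat) : zmx :=
  foldr (fun i P => zmul (zletter X i) P) zid w.

Definition ztrw (w : seq nat) (X : seq zmx) : int := ztrace (zprod X w).

Section IntegerModel.
Variable F : fieldType.

Definition zmx_to (a : zmx) : 'M[F]_3 := \matrix_(i, j) (zent a i j)%:~R.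

Definition ztriple_to (X : seq zmx) : triple F := fun i => zmx_to (nth [::] X i).

Lemma zmx_to_of f : zmx_to (zmx_of f) = \matrix_(i, j) (f i j)%:~R.
Proof. by apply/matrixP => i j; rewrite !mxE /zent !nth_mkseq. Qed.

Lemma zmx_to_mul a b : zmx_to (zmul a b) = zmx_to a *m zmx_to b.
Proof.
apply/matrixP => i j; rewrite zmx_to_of !mxE !big_ord_recl big_ord0 addr0 !mxE.
by rewrite !rmorphD !rmorphM addrA.
Qed.

Lemma zmx_to_nilpotent a : znilpotent a -> nilpotent_mx (zmx_to a).
Proof.
move=> /eqP a3; exists 3%N.
rewrite !exprS expr0 mulr1 -!mulmxE -!zmx_to_mul a3 zmx_to_of.
by apply/matrixP => i j; rewrite !mxE.
Qed.

Lemma ztriple_to_in_N X : all znilpotent X -> in_N (ztriple_to X).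
Proof.
move=> /allP nilX i; rewrite /ztriple_to.
have [/(mem_nth [::]) /nilX | /(nth_default [::]) ->] := ltnP i (size X).
  exact: zmx_to_nilpotent.
by exists 1%N; apply/matrixP => r c; rewrite expr1 !mxE /zent !nth_nil.
Qed.

Lemma zmx_to_trace a : \tr (zmx_to a) = (ztrace a)%:~R.
Proof. by rewrite /mxtrace !big_ord_recl big_ord0 addr0 !mxE !rmorphD addrA. Qed.

Lemma zmx_to_prod X w :
  \prod_(i <- w) ztriple_to X (inord i.-1) = zmx_to (zprod X w).
Proof.
elim: w => [|a w IH].
  by rewrite big_nil zmx_to_of; apply/matrixP => i j; rewrite !mxE.
by rewrite big_cons IH zmx_to_mul /ztriple_to /zletter /inord val_insubd.
Qed.

Lemma trw_ztriple_to w X : trw w (ztriple_to X) = (ztrw w X)%:~R.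
Proof. by rewrite /trw zmx_to_prod zmx_to_trace. Qed.

End IntegerModel.

Definition witnesses : seq (seq nat * (seq zmx * seq zmx)) := [::
  ([:: 1; 3]%N, ([:: [:: [:: 0; 1; 0]; [:: 0; 0; 1]; [:: 0; 0; 0]]; [:: [:: (-1); (-1); (-1)]; [:: 0; 0; 0]; [:: 1; 0; 1]]; [:: [:: (-1); (-1); (-1)]; [:: 0; 0; 0]; [:: 1; 0; 1]]], [:: [:: [:: 0; 1; 0]; [:: 0; 0; 1]; [:: 0; 0; 0]]; [:: [:: (-1); (-1); (-1)]; [:: 0; 0; 0]; [:: 1; 0; 1]]; [:: [:: (-1); 0; (-1)]; [:: 0; 0; 0]; [:: 1; (-1); 1]]]));
  ([:: 1; 2; 3]%N, ([:: [:: [:: 0; 1; 0]; [:: 0; 0; 1]; [:: 0; 0; 0]]; [:: [:: (-1); (-1); (-1)]; [:: 0; 0; 0]; [:: 1; 0; 1]]; [:: [:: 0; (-1); (-1)]; [:: 0; 0; 0]; [:: 0; (-1); 0]]], [:: [:: [:: 0; 1; 0]; [:: 0; 0; 1]; [:: 0; 0; 0]]; [:: [:: (-1); (-1); (-1)]; [:: 0; 0; 0]; [:: 1; 0; 1]]; [:: [:: 0; 0; (-1)]; [:: 0; 0; 0]; [:: 0; (-1); 0]]]));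
  ([:: 1; 3; 2]%N, ([:: [:: [:: 0; 1; 0]; [:: 0; 0; 1]; [:: 0; 0; 0]]; [:: [:: (-1); (-1); (-1)]; [:: 1; 1; 0]; [:: 0; 0; 0]]; [:: [:: 0; (-1); (-1)]; [:: 0; 0; 0]; [:: 0; 1; 0]]], [:: [:: [:: 0; 1; 0]; [:: 0; 0; 1]; [:: 0; 0; 0]]; [:: [:: (-1); (-1); (-1)]; [:: 1; 1; 0]; [:: 0; 0; 0]]; [:: [:: 0; 0; (-1)]; [:: 0; (-1); (-1)]; [:: 0; 1; 1]]]));
  ([:: 2; 3]%N, ([:: [:: [:: 0; 1; 0]; [:: 0; 0; 1]; [:: 0; 0; 0]]; [:: [:: (-1); (-1); (-1)]; [:: 1; 1; 0]; [:: 0; 0; 0]]; [:: [:: 0; (-1); 0]; [:: 0; (-1); 1]; [:: 0; (-1); 1]]], [:: [:: [:: 0; 1; 0]; [:: 0; 0; 1]; [:: 0; 0; 0]]; [:: [:: (-1); (-1); (-1)]; [:: 1; 1; 0]; [:: 0; 0; 0]]; [:: [:: 0; 0; (-1)]; [:: 0; (-1); 1]; [:: 0; (-1); 1]]]));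
  ([:: 1; 3; 3]%N, ([:: [:: [:: 0; 1; 0]; [:: 0; 0; 1]; [:: 0; 0; 0]]; [:: [:: (-1); (-1); (-1)]; [:: 1; 1; 0]; [:: 0; 0; 0]]; [:: [:: 0; 0; (-1)]; [:: 0; 0; 1]; [:: (-1); (-1); 0]]], [:: [:: [:: 0; 1; 0]; [:: 0; 0; 1]; [:: 0; 0; 0]]; [:: [:: (-1); (-1); (-1)]; [:: 1; 1; 0]; [:: 0; 0; 0]]; [:: [:: 0; 0; 0]; [:: 0; 0; 0]; [:: (-1); (-1); 0]]]));
  ([:: 2; 2; 3]%N, ([:: [:: [:: 0; 1; 0]; [:: 0; 0; 1]; [:: 0; 0; 0]]; [:: [:: (-1); (-1); (-1)]; [:: 1; 1; 0]; [:: 0; 0; 0]]; [:: [:: 0; (-1); (-1)]; [:: 0; 0; 0]; [:: 0; (-1); 0]]], [:: [:: [:: 0; 1; 0]; [:: 0; 0; 1]; [:: 0; 0; 0]]; [:: [:: (-1); (-1); 0]; [:: 1; 1; 0]; [:: 0; 0; 0]]; [:: [:: 0; (-1); (-1)]; [:: 0; 0; 0]; [:: 0; (-1); 0]]]));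
  ([:: 1; 1; 3]%N, ([:: [:: [:: 0; 1; 0]; [:: 0; 0; 1]; [:: 0; 0; 0]]; [:: [:: (-1); (-1); (-1)]; [:: 1; 1; 0]; [:: 0; 0; 0]]; [:: [:: 1; 1; (-1)]; [:: (-1); (-1); 0]; [:: 0; 0; 0]]], [:: [:: [:: 0; 1; 0]; [:: 0; 0; 1]; [:: 0; 0; 0]]; [:: [:: (-1); (-1); 0]; [:: 1; 1; 0]; [:: 0; 0; 0]]; [:: [:: 0; 0; 0]; [:: 0; 0; 0]; [:: (-1); (-1); 0]]]));
  ([:: 1; 1; 2; 2; 1; 2]%N, ([:: [:: [:: 0; 1; 0]; [:: 0; 0; 1]; [:: 0; 0; 0]]; [:: [:: (-1); (-1); (-1)]; [:: 0; 0; 0]; [:: 1; 0; 1]]; [:: [:: 0; 0; 0]; [:: 0; 0; 0]; [:: 0; 0; 0]]], [:: [:: [:: 0; 1; 0]; [:: 0; 0; 1]; [:: 0; 0; 0]]; [:: [:: (-1); 0; (-1)]; [:: 0; 0; (-1)]; [:: 1; 0; 1]]; [:: [:: 0; 0; 0]; [:: 0; 0; 0]; [:: 0; 0; 0]]]));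
  ([:: 1; 2]%N, ([:: [:: [:: 0; 1; 0]; [:: 0; 0; 1]; [:: 0; 0; 0]]; [:: [:: (-1); (-1); (-1)]; [:: 0; 0; 0]; [:: 1; 0; 1]]; [:: [:: 0; (-1); 0]; [:: 0; 0; (-1)]; [:: 0; 0; 0]]], [:: [:: [:: 0; 1; 0]; [:: 0; 0; 1]; [:: 0; 0; 0]]; [:: [:: (-1); 0; (-1)]; [:: 0; 0; 0]; [:: 1; (-1); 1]]; [:: [:: 0; (-1); (-1)]; [:: 0; 0; (-1)]; [:: 0; 0; 0]]]));
  ([:: 1; 2; 2]%N, ([:: [:: [:: 0; 1; 0]; [:: 0; 0; 1]; [:: 0; 0; 0]]; [:: [:: (-1); 0; (-1)]; [:: 0; 0; (-1)]; [:: 1; 0; 1]]; [:: [:: 0; 0; (-1)]; [:: (-1); 0; (-1)]; [:: 0; 0; 0]]], [:: [:: [:: 0; 1; 0]; [:: 0; 0; 1]; [:: 0; 0; 0]]; [:: [:: (-1); 0; (-1)]; [:: 0; 0; 0]; [:: 1; 0; 1]]; [:: [:: 0; 0; (-1)]; [:: (-1); 0; (-1)]; [:: 0; 0; 0]]]));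
  ([:: 1; 1; 2; 1; 3]%N, ([:: [:: [:: 0; 1; 0]; [:: 0; 0; 1]; [:: 0; 0; 0]]; [:: [:: (-1); 0; (-1)]; [:: 0; 0; 0]; [:: 1; 0; 1]]; [:: [:: 0; (-1); 0]; [:: 0; 0; 0]; [:: 0; 1; 0]]], [:: [:: [:: 0; 1; 0]; [:: 0; 0; 1]; [:: 0; 0; 0]]; [:: [:: (-1); 0; (-1)]; [:: 0; 0; 0]; [:: 1; 0; 1]]; [:: [:: 0; 0; 0]; [:: 1; 0; 1]; [:: 0; 0; 0]]]));
  ([:: 1; 1; 2]%N, ([:: [:: [:: 0; 1; 0]; [:: 0; 0; 1]; [:: 0; 0; 0]]; [:: [:: (-1); 0; (-1)]; [:: (-1); 0; 0]; [:: 1; 0; 1]]; [:: [:: 0; 0; 1]; [:: 0; 0; 1]; [:: 0; 0; 0]]], [:: [:: [:: 0; 1; 0]; [:: 0; 0; 1]; [:: 0; 0; 0]]; [:: [:: (-1); 0; 1]; [:: (-1); 0; 0]; [:: (-1); 0; 1]]; [:: [:: 0; 0; (-1)]; [:: 0; 0; (-1)]; [:: 0; 0; 0]]]));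
  ([:: 2; 3; 3]%N, ([:: [:: [:: 0; 1; 0]; [:: 0; 0; 1]; [:: 0; 0; 0]]; [:: [:: 0; (-1); 0]; [:: 0; 0; 0]; [:: 0; (-1); 0]]; [:: [:: (-1); (-1); (-1)]; [:: 1; 1; 0]; [:: 0; 0; 0]]], [:: [:: [:: 0; 1; 0]; [:: 0; 0; 1]; [:: 0; 0; 0]]; [:: [:: 0; (-1); 0]; [:: 0; 0; 0]; [:: 0; (-1); 0]]; [:: [:: (-1); (-1); 0]; [:: 1; 1; 0]; [:: 0; 0; 0]]]));
  ([:: 1; 1; 2; 3]%N, ([:: [:: [:: 0; 1; 0]; [:: 0; 0; 1]; [:: 0; 0; 0]]; [:: [:: (-1); 1; (-1)]; [:: (-1); 1; 0]; [:: 0; 0; 0]]; [:: [:: (-1); 1; (-1)]; [:: (-1); 1; 0]; [:: 0; 0; 0]]], [:: [:: [:: 0; 1; 0]; [:: 0; 0; 1]; [:: 0; 0; 0]]; [:: [:: 0; (-1); 0]; [:: 0; 0; 0]; [:: 0; (-1); 0]]; [:: [:: 0; 0; 0]; [:: (-1); 0; 1]; [:: 0; 0; 0]]]));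
  ([:: 1; 1; 2; 2]%N, ([:: [:: [:: 0; 1; 0]; [:: 0; 0; 1]; [:: 0; 0; 0]]; [:: [:: (-1); (-1); 0]; [:: 1; 1; 0]; [:: (-1); 0; 0]]; [:: [:: 0; 0; 0]; [:: 0; 0; 0]; [:: 0; 0; 0]]], [:: [:: [:: 0; 1; 0]; [:: 0; 0; 1]; [:: 0; 0; 0]]; [:: [:: 0; 0; (-1)]; [:: 0; 0; (-1)]; [:: (-1); 1; 0]]; [:: [:: 0; 0; 0]; [:: 0; 0; 0]; [:: 0; 0; 0]]]));
  ([:: 1; 1; 3; 2]%N, ([:: [:: [:: 0; 1; 0]; [:: 0; 0; 1]; [:: 0; 0; 0]]; [:: [:: (-1); 1; (-1)]; [:: (-1); 1; 0]; [:: 0; 0; 0]]; [:: [:: 1; (-1); (-1)]; [:: 1; (-1); 0]; [:: 0; 0; 0]]], [:: [:: [:: 0; 1; 0]; [:: 0; 0; 1]; [:: 0; 0; 0]]; [:: [:: 0; 0; 0]; [:: (-1); 0; (-1)]; [:: 0; 0; 0]]; [:: [:: 0; (-1); 0]; [:: 0; 0; 0]; [:: 0; 1; 0]]]));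
  ([:: 1; 1; 3; 3; 1; 3]%N, ([:: [:: [:: 0; 1; 0]; [:: 0; 0; 1]; [:: 0; 0; 0]]; [:: [:: 0; 0; 0]; [:: 0; 0; 0]; [:: 0; 0; 0]]; [:: [:: (-1); (-1); (-1)]; [:: 0; 0; 0]; [:: 1; 0; 1]]], [:: [:: [:: 0; 1; 0]; [:: 0; 0; 1]; [:: 0; 0; 0]]; [:: [:: 0; 0; 0]; [:: 0; 0; 0]; [:: 0; 0; 0]]; [:: [:: (-1); 0; (-1)]; [:: 0; 0; (-1)]; [:: 1; 0; 1]]]));
  ([:: 1; 1; 3; 3]%N, ([:: [:: [:: 0; 1; 0]; [:: 0; 0; 1]; [:: 0; 0; 0]]; [:: [:: 0; 0; 0]; [:: 0; 0; 0]; [:: 0; 0; 0]]; [:: [:: (-1); (-1); 0]; [:: 1; 1; 0]; [:: (-1); 0; 0]]], [:: [:: [:: 0; 1; 0]; [:: 0; 0; 1]; [:: 0; 0; 0]]; [:: [:: 0; 0; 0]; [:: 0; 0; 0]; [:: 0; 0; 0]]; [:: [:: 0; 0; (-1)]; [:: 0; 0; (-1)]; [:: (-1); 1; 0]]]));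
  ([:: 2; 2; 3; 1]%N, ([:: [:: [:: 0; 1; 0]; [:: 0; 0; 1]; [:: 0; 0; 0]]; [:: [:: (-1); (-1); (-1)]; [:: 1; 1; 0]; [:: 0; 0; 0]]; [:: [:: 0; 1; (-1)]; [:: 0; 0; (-1)]; [:: 0; 0; 0]]], [:: [:: [:: 0; 0; 1]; [:: 0; 0; 0]; [:: 0; 0; 0]]; [:: [:: (-1); (-1); (-1)]; [:: 0; 0; 0]; [:: 1; 0; 1]]; [:: [:: 0; 0; 0]; [:: (-1); 0; (-1)]; [:: 0; 0; 0]]]));
  ([:: 2; 2; 1; 2; 3]%N, ([:: [:: [:: 0; 0; 1]; [:: 0; 0; 0]; [:: 0; 0; 0]]; [:: [:: (-1); (-1); 0]; [:: 1; 1; 0]; [:: (-1); 0; 0]]; [:: [:: 0; (-1); (-1)]; [:: 0; 0; 0]; [:: 0; 0; 0]]], [:: [:: [:: 0; 0; 1]; [:: 0; 0; 0]; [:: 0; 0; 0]]; [:: [:: (-1); (-1); 0]; [:: 1; 1; 0]; [:: (-1); 0; 0]]; [:: [:: 0; 0; 0]; [:: 0; 0; (-1)]; [:: 0; 0; 0]]]));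
  ([:: 3; 3; 2; 1]%N, ([:: [:: [:: 0; 1; 0]; [:: 0; 0; 1]; [:: 0; 0; 0]]; [:: [:: 0; (-1); (-1)]; [:: 0; 0; 1]; [:: 0; 0; 0]]; [:: [:: 0; (-1); (-1)]; [:: 0; 0; 0]; [:: 0; (-1); 0]]], [:: [:: [:: 0; 0; 1]; [:: 0; 0; 0]; [:: 0; 0; 0]]; [:: [:: (-1); (-1); 0]; [:: 1; 1; 0]; [:: 0; 0; 0]]; [:: [:: 0; (-1); 0]; [:: 0; 0; 0]; [:: (-1); (-1); 0]]]));
  ([:: 2; 2; 1; 3]%N, ([:: [:: [:: 0; 1; 0]; [:: 0; 0; 1]; [:: 0; 0; 0]]; [:: [:: (-1); (-1); (-1)]; [:: 1; 1; 0]; [:: 0; 0; 0]]; [:: [:: 0; (-1); (-1)]; [:: 0; 0; (-1)]; [:: 0; 0; 0]]], [:: [:: [:: 0; 0; 1]; [:: 0; 0; 0]; [:: 0; 0; 0]]; [:: [:: (-1); 0; (-1)]; [:: 0; 0; (-1)]; [:: 1; 0; 1]]; [:: [:: 0; (-1); 0]; [:: 0; 0; 0]; [:: 0; 1; 0]]]));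
  ([:: 3; 3; 1; 2]%N, ([:: [:: [:: 0; 1; 0]; [:: 0; 0; 1]; [:: 0; 0; 0]]; [:: [:: 0; (-1); (-1)]; [:: 0; 0; (-1)]; [:: 0; 0; 0]]; [:: [:: (-1); 1; (-1)]; [:: (-1); 1; 0]; [:: 0; 0; 0]]], [:: [:: [:: 0; 0; 1]; [:: 0; 0; 0]; [:: 0; 0; 0]]; [:: [:: 0; (-1); 0]; [:: 0; 0; 0]; [:: 0; (-1); 0]]; [:: [:: (-1); 0; 1]; [:: 0; 0; (-1)]; [:: (-1); 0; 1]]]));
  ([:: 3; 3; 1; 3; 2]%N, ([:: [:: [:: 0; 0; 1]; [:: 0; 0; 0]; [:: 0; 0; 0]]; [:: [:: 0; (-1); (-1)]; [:: 0; 0; 0]; [:: 0; 0; 0]]; [:: [:: (-1); 0; (-1)]; [:: 0; 0; (-1)]; [:: 1; 0; 1]]], [:: [:: [:: 0; 0; 1]; [:: 0; 0; 0]; [:: 0; 0; 0]]; [:: [:: 0; 0; (-1)]; [:: 0; 0; (-1)]; [:: 0; 0; 0]]; [:: [:: (-1); (-1); (-1)]; [:: 0; 0; 0]; [:: 1; 0; 1]]]));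
  ([:: 2; 2; 3; 3]%N, ([:: [:: [:: 0; 0; 0]; [:: 0; 0; 0]; [:: 0; 0; 0]]; [:: [:: (-1); (-1); (-1)]; [:: 0; 0; 0]; [:: 1; 0; 1]]; [:: [:: (-1); (-1); (-1)]; [:: 1; 1; 0]; [:: 0; 0; 0]]], [:: [:: [:: 0; 0; 0]; [:: 0; 0; 0]; [:: 0; 0; 0]]; [:: [:: (-1); (-1); (-1)]; [:: 0; 0; 0]; [:: 1; 0; 1]]; [:: [:: (-1); (-1); 0]; [:: 1; 1; 0]; [:: 1; 0; 0]]]));
  ([:: 2; 2; 3; 3; 2; 3]%N, ([:: [:: [:: 0; 0; 0]; [:: 0; 0; 0]; [:: 0; 0; 0]]; [:: [:: (-1); (-1); (-1)]; [:: 0; 0; 0]; [:: 1; 0; 1]]; [:: [:: (-1); (-1); 0]; [:: 1; 1; 0]; [:: 0; (-1); 0]]], [:: [:: [:: 0; 0; 0]; [:: 0; 0; 0]; [:: 0; 0; 0]]; [:: [:: (-1); (-1); (-1)]; [:: 0; 0; 0]; [:: 1; 0; 1]]; [:: [:: (-1); 0; (-1)]; [:: 0; 0; (-1)]; [:: 1; 0; 1]]]))].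

Definition certificate (w : seq nat) (uv : seq zmx * seq zmx) : bool :=
  [&& all znilpotent uv.1, all znilpotent uv.2, ztrw w uv.1 != ztrw w uv.2 &
      all (fun w' => (w' == w) || (ztrw w' uv.1 == ztrw w' uv.2)) P33].

Lemma witnesses_certified :
  all (fun w => has (fun c => (c.1 == w) && certificate w c.2) witnesses) S33.
Proof. by vm_compute. Qed.

Lemma P33_minus_not_separating (F : fieldType) w :
  [pchar F] =i pred0 -> w \in S33 -> ~ separating (P33_minus (trw (F := F) w)).
Proof.
move=> F0 S33w.
have /hasP [[key [u v]] _ /andP [_ cert]] := allP witnesses_certified w S33w.
case/and4P: cert => nil_u nil_v ne_uv /allP agree.
apply: (trset_minus_not_separating (ztriple_to_in_N F nil_u) (ztriple_to_in_N F nil_v)).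
  by rewrite !trw_ztriple_to => /(intr_inj_pchar0 F0) /eqP; apply/negP.
move=> w' /agree /orP [-> // | /eqP agree_w' _].
by rewrite !trw_ztriple_to agree_w'.
Qed.

Theorem lemma3p4 (F : closedFieldType) (hchar : [pchar F] =i pred0) :
  (forall w, w \in S33 -> ~ separating (P33_minus (trw (F := F) w))) /\
  (forall S' : (triple F -> F) -> Prop,
     (forall g, S' g -> @trset F S33 g) ->
     (exists2 w, w \in S33 & forall g, S' g -> ~ eq_on_N g (trw w)) ->
     ~ separating S').
Proof.
split=> [w S33w | S' S'_S33 [w S33w S'_not_w]]; first exact: P33_minus_not_separating.
move=> sepS'.
apply: (P33_minus_not_separating hchar S33w (separating_sub _ sepS')) => g S'g.
have [w' S33w' g_w'] := S'_S33 g S'g.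
split; last exact: S'_not_w.
by exists w' => //; rewrite mem_cat S33w'.
Qed.
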